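(* Let $A,B,C\in\mathbb{C}$ with $B\neq C$, and let $A'$ be the reflection of $A$ in the line $BC$. Define points $W_{-1},W_0,\dots,W_5$ by $$W_{-1}=C,\quad W_0=B,\quad W_{k+1}=W_k+\rho^{-1}(W_{k-1}-W_k)\ (k\ge 0).$$ Then $W_0,\dots,W_5$ are the vertices of the regular hexagon on $BC$, in counterclockwise order, and $W_5=C$. Define $T_0=A$ and $T_{k+1}=W_k+\rho\,(T_k-W_k)$ for $k=0,\dots,4$. For $k=1,\dots,5$ let $F_k$ be the triangle with vertices $W_{k-1},T_k,W_k$, with base $W_{k-1}W_k$ and apex $T_k$. Then for every $k=1,\dots,5$, the reflection of the apex $T_k$ in the line $W_{k-1}W_k$ equals $A'$.
   Context: The plane is identified with $\mathbb{C}$, and $\rho=e^{2\pi i/3}$. Geometric meaning of the construction: - For counterclockwise $(A,B,C)$, the hexagon $W_0\cdots W_5$ is the regular hexagon $H_0$ erected outwardly on $BC$. - $F_1$ is the flank triangle at $B$ between $H_0$ and the hexagon erected on $AB$. - Each subsequent $F_{k+1}$ is the flank triangle at $W_k$ between $H_0$ and the regular hexagon erected on the side $W_kT_k$ of $F_k$. - $T_{k+1}$ is the vertex of that hexagon adjacent to $W_k$. *)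

(* the plane is a numClosedFieldType K (e.g. algC, or R[i]),
   with imaginary unit 'i, conjugation ^*, and square root sqrtC. *)
From HB Require Import structures.
From mathcomp Require Import all_boot all_order all_algebra.
Set Implicit Arguments. Unset Strict Implicit. Unset Printing Implicit Defensive.
Import Order.TTheory GRing.Theory Num.Theory.
Local Open Scope ring_scope.

Section Hex.
Variable K : numClosedFieldType.

(* rho = e^{2 pi i / 3} = -1/2 + i sqrt(3)/2 *)
Definition rho : K := - (1 / 2%:R) + 'i * (sqrtC 3%:R / 2%:R).

(* reflection of P in the line through U and V (U <> V) *)
Definition refl (U V P : K) : K := U + (V - U) * ((P - U) / (V - U))^*.

(* Wpair B C n = (W_{n-1}, W_n) with W_{-1} = C, W_0 = B,
   W_{k+1} = W_k + rho^{-1} (W_{k-1} - W_k). *)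
Fixpoint Wpair (B C : K) (n : nat) : K * K :=
  match n with
  | 0 => (C, B)
  | n'.+1 => let: (a, b) := Wpair B C n' in (b, b + rho^-1 * (a - b))
  end.

Definition W (B C : K) (k : nat) : K := (Wpair B C k).2.

Fixpoint T (A B C : K) (n : nat) : K :=
  match n with
  | 0 => A
  | n'.+1 => W B C n' + rho * (T A B C n' - W B C n')
  end.
End Hex.

(* Both [W_(k-1), W_k, W_(k+1)] and [T_k, T_(k+1)] are obtained by rotations of
   order three about [W_k]: the line [W_k W_(k+1)] is the line [W_(k-1) W_k]
   turned by [rho^-1] and [T_(k+1)] is [T_k] turned by [rho].  A reflection
   conjugates a rotation into its inverse, so reflecting [T_(k+1)] in the new
   line amounts to reflecting [T_k] in the old one after a total turn of
   [rho^3 = 1]. *)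

From Pilot Require Import Defs.
From mathcomp Require Import all_boot all_order all_algebra.
From mathcomp Require Import ring.
Import Order.TTheory GRing.Theory Num.Theory.
Local Open Scope ring_scope.

Section Hexagon.
Variable K : numClosedFieldType.
Local Notation rho := (rho K).

Lemma rho_root : rho ^+ 2 + rho + 1 = 0.
Proof.
have two_neq0 : (2%:R : K) != 0 by rewrite pnatr_eq0.
have sqr_i : ('i : K) ^+ 2 = -1 := sqrCi K.
have sqr_q : sqrtC (3%:R : K) ^+ 2 = 3%:R := sqrtCK _.
rewrite /Defs.rho; set i := 'i in sqr_i *; set q := sqrtC _ in sqr_q *.
have -> : (- (1 / 2%:R) + i * (q / 2%:R)) ^+ 2 + (- (1 / 2%:R) + i * (q / 2%:R)) + 1
  = (i ^+ 2 * q ^+ 2 + 3%:R) / 4%:R by field.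
by rewrite sqr_i sqr_q mulN1r addNr mul0r.
Qed.

Lemma rho_cube : rho ^+ 3 = 1.
Proof.
apply/eqP; rewrite -subr_eq0; apply/eqP.
have -> : rho ^+ 3 - 1 = (rho - 1) * (rho ^+ 2 + rho + 1) by ring.
by rewrite rho_root mulr0.
Qed.

Lemma rho_neq0 : rho != 0.
Proof. by apply: contra_eq_neq rho_cube => ->; rewrite expr0n eq_sym oner_eq0. Qed.

Lemma rhoV_root : rho^-1 ^+ 2 + rho^-1 + 1 = 0.
Proof.
have -> : rho^-1 ^+ 2 + rho^-1 + 1 = (rho ^+ 2 + rho + 1) / rho ^+ 2.
  by field; rewrite rho_neq0.
by rewrite rho_root mul0r.
Qed.

Lemma rho_normC : rho * rho^* = 1.
Proof.
have two_neq0 : (2%:R : K) != 0 by rewrite pnatr_eq0.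
have sqr_i : ('i : K) ^+ 2 = -1 := sqrCi K.
have sqr_q : sqrtC (3%:R : K) ^+ 2 = 3%:R := sqrtCK _.
have q_real : (sqrtC (3%:R : K))^* = sqrtC 3%:R by rewrite geC0_conj ?sqrtC_ge0 ?ler0n.
rewrite /Defs.rho rmorphD rmorphN rmorphM /= conjCi !fmorph_div /= rmorph1.
rewrite !rmorph_nat q_real; set i := 'i in sqr_i *; set q := sqrtC _ in sqr_q *.
have -> : (- (1 / 2%:R) + i * (q / 2%:R)) * (- (1 / 2%:R) + - i * (q / 2%:R))
  = (1 - i ^+ 2 * q ^+ 2) / 4%:R by field.
by rewrite sqr_i sqr_q mulN1r opprK; field.
Qed.

Lemma rho_conjV : rho^* = rho^-1.
Proof. by apply: (mulfI rho_neq0); rewrite rho_normC divff // rho_neq0. Qed.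

Lemma refl_sym (U V P : K) :
  U != V -> refl V U P = refl U V P.
Proof.
move=> neq_UV; rewrite /refl.
have dVU : V - U != 0 by rewrite subr_eq0 eq_sym.
have dUV : U - V != 0 by rewrite subr_eq0.
have -> : (P - V) / (U - V) = 1 - (P - U) / (V - U) by field; rewrite dVU dUV.
by rewrite raddfB /= rmorph1; ring.
Qed.

Lemma refl_rotate (u a b t : K) :
  u ^+ 3 = 1 -> u^* = u^-1 -> a != b ->
  refl b (b + u^-1 * (a - b)) (b + u * (t - b)) = refl a b t.
Proof.
move=> u_cube u_conj neq_ab.
have u_neq0 : u != 0 by apply: contra_eq_neq u_cube => ->; rewrite expr0n eq_sym oner_eq0.
have dab : a - b != 0 by rewrite subr_eq0.
rewrite -(refl_sym _ _ t neq_ab) /refl.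
have -> : (b + u * (t - b) - b) / (b + u^-1 * (a - b) - b) = u ^+ 2 * ((t - b) / (a - b)).
  by field; rewrite dab u_neq0.
rewrite rmorphM rmorphXn /= u_conj; set z := _^*; clearbody z.
have -> : b + (b + u^-1 * (a - b) - b) * (u^-1 ^+ 2 * z) = b + (a - b) * z / u ^+ 3.
  by field; rewrite u_neq0.
by rewrite u_cube divr1.
Qed.

Lemma Wpair_refl_T (A B C : K) (k : nat) : B != C ->
  (Wpair B C k).1 != (Wpair B C k).2 /\
  refl (Wpair B C k).1 (Wpair B C k).2 (T A B C k) = refl C B A.
Proof.
move=> neq_BC; elim: k => [|k [neq_ab IH]] /=; first by rewrite eq_sym neq_BC.
rewrite /W; case: (Wpair B C k) neq_ab IH => a b /= neq_ab IH; split.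
  by rewrite -subr_eq0 opprD addNKr oppr_eq0 mulf_eq0 invr_eq0 negb_or rho_neq0 subr_eq0.
by rewrite refl_rotate ?rho_cube ?rho_conjV.
Qed.

Lemma Wpair_fst (B C : K) (k : nat) :
  (Wpair B C k.+1).1 = W B C k.
Proof. by rewrite /W /=; case: (Wpair B C k). Qed.

Lemma W5 (B C : K) : W B C 5 = C.
Proof.
apply/eqP; rewrite -subr_eq0; apply/eqP; rewrite /W /=.
set s := rho^-1.
(* [W_5 - C] sums the six sides, a geometric progression of ratio [-s] *)
set e := (X in X = 0).
have -> : e = (B - C) * (1 - s) * (s ^+ 2 - s + 1) * (s ^+ 2 + s + 1) by rewrite /e; ring.
by rewrite rhoV_root mulr0.
Qed.

End Hexagon.

Theorem mainTheorem4 (K : numClosedFieldType) (A B C : K) :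
  B != C ->
  W B C 5 = C /\
  (forall k : nat, (1 <= k <= 5)%N ->
     refl (W B C k.-1) (W B C k) (T A B C k) = refl B C A).
Proof.
move=> neq_BC; split; first exact: W5.
move=> [|k] // _ /=.
rewrite (refl_sym _ C B A) 1?eq_sym //.
by have [_ <-] := Wpair_refl_T _ A _ _ k.+1 neq_BC; rewrite Wpair_fst.
Qed.
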